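(* Let $X$ be a compact metric space, $f\colon X\to X$ continuous, and let $S\in 2^X$ be a periodic point of $2^f$ with fundamental period $k$. Then for every $0<j<k$, $f^j(S)\not\subseteq S$.
   Context: $2^X$ is the space of nonempty closed subsets of $X$ with the Hausdorff metric and $2^f(C)=f(C)$; $f^j(S)=(2^f)^j(S)$. *)

From HB Require Import structures.
From mathcomp Require Import all_boot all_order all_algebra.
From mathcomp Require Import all_classical all_reals all_analysis.
Set Implicit Arguments. Unset Strict Implicit. Unset Printing Implicit Defensive.
Import Order.TTheory GRing.Theory Num.Theory.
Local Open Scope classical_set_scope.

Definition in_hyperspace {T : topologicalType} (C : set T) : Prop :=
  C !=set0 /\ closed C.

Definition hypermap {T : Type} (f : T -> T) (C : set T) : set T := f @` C.

Definition hyperiter {T : Type} (f : T -> T) (j : nat) (S : set T) : set T :=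
  iter j (hypermap f) S.

Definition hyper_periodic_fund {T : Type} (f : T -> T) (S : set T) (k : nat) : Prop :=
  (0 < k)%N /\ hyperiter f k S = S /\
  (forall j : nat, (0 < j)%N -> (j < k)%N -> hyperiter f j S <> S).

From HB Require Import structures.
From mathcomp Require Import all_boot all_order all_algebra.
From mathcomp Require Import all_classical all_reals all_analysis.
Local Open Scope classical_set_scope.

(* If f^j(S) is contained in S, applying f^j repeatedly gives the chain
   f^(mj)(S) ⊆ ... ⊆ f^(2j)(S) ⊆ f^j(S); taking m = k, periodicity makes the
   left end S itself, so f^j(S) = S with 0 < j < k, contradicting minimality
   of k. *)

Lemma hyperiterD {T : Type} (f : T -> T) (a b : nat) (S : set T) :
  hyperiter f (a + b) S = hyperiter f a (hyperiter f b S).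
Proof. by rewrite /hyperiter iterD. Qed.

Lemma hyperiter_subset {T : Type} (f : T -> T) (n : nat) (A B : set T) :
  A `<=` B -> hyperiter f n A `<=` hyperiter f n B.
Proof. by move=> AB; elim: n => //= n IH; exact: image_subset. Qed.

Lemma hyperiter_periodM {T : Type} (f : T -> T) (k : nat) (S : set T) :
  hyperiter f k S = S -> forall m, hyperiter f (m * k) S = S.
Proof. by move=> hk; elim=> // m IH; rewrite mulSn hyperiterD IH hk. Qed.

Lemma hyperiter_mul_subset {T : Type} (f : T -> T) (j : nat) (S : set T) :
  hyperiter f j S `<=` S -> forall m, hyperiter f (m.+1 * j) S `<=` hyperiter f j S.
Proof.
move=> sub; elim=> [|m IH]; first by rewrite mul1n.
rewrite mulSn addnC hyperiterD.
by apply: subset_trans IH; exact: hyperiter_subset.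
Qed.

Theorem lemma4p5 (R : realType) (X : metricType R) (f : X -> X)
  (hX : compact [set: X]) (hf : continuous f)
  (S : set X) (hS : in_hyperspace S) (k : nat)
  (hper : hyper_periodic_fund f S k) :
  forall j : nat, (0 < j)%N -> (j < k)%N -> ~ (hyperiter f j S `<=` S).
Proof.
move=> j j0 jk sub; case: hper => k0 [hk hmin].
apply: (hmin j j0 jk); apply/seteqP; split=> //.
have := hyperiter_mul_subset f j S sub k.-1.
by rewrite prednK // mulnC hyperiter_periodM.
Qed.
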